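(* (1) For $N<N'$, $\pi_{N'}\circ\iota_{N,N'}=\pi_N$. (2) For all $N_1,N_2\ge0$, $\pi_{N_1+N_2}\circ\mathfrak m_{N_1,N_2}=\mathfrak m\circ(\pi_{N_1}\times\pi_{N_2})$, where $\mathfrak m:L^-\mathrm{GL}_K\times L^-\mathrm{GL}_K\to L^-\mathrm{GL}_K$ is the group multiplication.
   Context: $\mathcal M(N,K)=\mathrm{Rep}(N,K)/\!/\mathrm{GL}_N$, with $\mathrm{Rep}(N,K)$ the triples $(B,\psi,\overline\psi)$, $B\in\mathrm{Mat}_{N\times N}(\mathbb C)$, $\psi\in\mathrm{Mat}_{N\times K}$, $\overline\psi\in\mathrm{Mat}_{K\times N}$, and $g\cdot(B,\psi,\overline\psi)=(gBg^{-1},g\psi,\overline\psi g^{-1})$. $L^-\mathrm{GL}_K$ is the group (under multiplication of matrix power series) of series $1+\sum_{i\ge1}g_iz^{-i}$, $g_i\in\mathfrak{gl}_K$. $\pi_N(B,\psi,\overline\psi)=1+\overline\psi(z-\widetilde B/2)^{-1}\psi$, $\widetilde B=B+\psi\overline\psi$. $\iota_{N,N'}(B,\psi,\overline\psi)=(\mathrm{diag}(B,0),\binom{\psi}{0},(\overline\psi\ 0))$. $\mathfrak m_{N_1,N_2}$ sends $(B^{(1)},\psi^{(1)},\overline\psi^{(1)})\times(B^{(2)},\psi^{(2)},\overline\psi^{(2)})$ to $\left(\begin{bmatrix}B^{(1)}&\psi^{(1)}\overline\psi^{(2)}\\-\psi^{(2)}\overline\psi^{(1)}&B^{(2)}\end{bmatrix},\begin{bmatrix}\psi^{(1)}\\\psi^{(2)}\end{bmatrix},\begin{bmatrix}\overline\psi^{(1)}&\overline\psi^{(2)}\end{bmatrix}\right)$.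 *)

From HB Require Import structures.
From mathcomp Require Import all_boot all_order all_algebra.
From mathcomp Require Import reals.
From mathcomp Require Import complex.
Set Implicit Arguments. Unset Strict Implicit. Unset Printing Implicit Defensive.
Import Order.TTheory GRing.Theory Num.Theory.
Local Open Scope ring_scope.

Section Defs.
Variable R : realType.
Local Notation C := R[i].

Record Rep (N K : nat) := mkRep {
  repB : 'M[C]_N;
  repPsi : 'M[C]_(N, K);
  repPsibar : 'M[C]_(K, N) }.

(* Elements of L^- GL_K: formal series 1 + sum_{i>=1} g_i z^{-i}, encoded by
   the coefficient sequence i |-> g_i (with g_0 = 1). *)
Definition series (K : nat) := nat -> 'M[C]_K.
Definition in_LmGL K (g : series K) : Prop := g 0%N = 1%:M.

Definition LmGL_mul K (g h : series K) : series K :=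
  fun n => \sum_(i < n.+1) g i *m h (n - i)%N.

(* pi_N(B,psi,psibar) = 1 + psibar (z - Btilde/2)^{-1} psi,
   Btilde = B + psi psibar, expanded in z^{-1}:
   (z - A)^{-1} = sum_{i>=0} A^i z^{-i-1}. *)
Definition Btilde N K (x : Rep N K) : 'M[C]_N := repB x + repPsi x *m repPsibar x.
Definition piN N K (x : Rep N K) : series K :=
  fun n => match n with
           | 0%N => 1%:M
           | m.+1 => repPsibar x *m ((2%:R)^-1 *: Btilde x) ^+ m *m repPsi x
           end.

Definition iotaN N d K (x : Rep N K) : Rep (N + d) K :=
  mkRep (block_mx (repB x) 0 0 (0 : 'M[C]_d))
        (col_mx (repPsi x) (0 : 'M[C]_(d, K)))
        (row_mx (repPsibar x) (0 : 'M[C]_(K, d))).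

Definition mN N1 N2 K (x1 : Rep N1 K) (x2 : Rep N2 K) : Rep (N1 + N2) K :=
  mkRep (block_mx (repB x1) (repPsi x1 *m repPsibar x2)
                  (- (repPsi x2 *m repPsibar x1)) (repB x2))
        (col_mx (repPsi x1) (repPsi x2))
        (row_mx (repPsibar x1) (repPsibar x2)).
End Defs.

From HB Require Import structures.
From mathcomp Require Import all_boot all_order all_algebra.
From mathcomp Require Import reals.
From mathcomp Require Import complex.
From Stdlib Require Import FunctionalExtensionality.
Set Implicit Arguments. Unset Strict Implicit. Unset Printing Implicit Defensive.
Import Order.TTheory GRing.Theory Num.Theory.
Local Open Scope ring_scope.

(* The coefficient of z^-(m+1) in pi_N x is psibar A^m psi, with A = Btilde/2.
   Under iota, A becomes diag(A, 0) and the zero padding of psi and psibar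
   annihilates everything but the old block.  Under m_{N1,N2}, A becomes block
   upper triangular with diagonal A1, A2 and corner psi1 psibar2; the corner of
   A^m is sum_i A1^i psi1 psibar2 A2^(m-1-i), and sandwiching A^m between
   (psibar1 psibar2) and (psi1; psi2) yields exactly the Cauchy product of the
   two series. *)

Lemma expmx_block_utri (F : pzRingType) n1 n2
    (A : 'M[F]_n1) (B : 'M[F]_(n1, n2)) (D : 'M[F]_n2) m :
  block_mx A B 0 D ^+ m =
  block_mx (A ^+ m) (\sum_(i < m) A ^+ i *m B *m D ^+ (m - i.+1)) 0 (D ^+ m).
Proof.
elim: m => [|m IHm]; first by rewrite !expr0 big_ord0 -scalar_mx_block.
rewrite exprSr IHm -[_ * _]/(mulmx _ _) mulmx_block !exprSr.
rewrite !mulmx0 !mul0mx !addr0 !add0r big_ord_recr /= subnn expr0 mulmx1.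
congr block_mx; rewrite addrC; congr (_ + _).
rewrite mulmx_suml; apply: eq_bigr => i _.
by rewrite -mulmxA -[_ *m D]/(_ * D) -exprSr subSn.
Qed.

Lemma mulmx_row_block_utri_col (F : pzRingType) p q n1 n2
    (u1 : 'M[F]_(p, n1)) (u2 : 'M[F]_(p, n2))
    (P : 'M[F]_n1) (Q : 'M[F]_(n1, n2)) (S : 'M[F]_n2)
    (v1 : 'M[F]_(n1, q)) (v2 : 'M[F]_(n2, q)) :
  row_mx u1 u2 *m block_mx P Q 0 S *m col_mx v1 v2 =
  u1 *m P *m v1 + u1 *m Q *m v2 + u2 *m S *m v2.
Proof.
by rewrite mul_row_block mulmx0 addr0 mul_row_col mulmxDl addrA.
Qed.

Lemma LmGL_mul_in (R : realType) K (g h : series R K) :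
  in_LmGL g -> in_LmGL h -> in_LmGL (LmGL_mul g h).
Proof. by rewrite /in_LmGL /LmGL_mul big_ord1 => -> ->; rewrite mul1mx. Qed.

Lemma LmGL_mulS (R : realType) K (g h : series R K) m :
  in_LmGL g -> in_LmGL h ->
  LmGL_mul g h m.+1 = g m.+1 + \sum_(i < m) g i.+1 *m h (m - i)%N + h m.+1.
Proof.
rewrite /in_LmGL /LmGL_mul => g0 h0.
rewrite big_ord_recl big_ord_recr /= g0 mul1mx subnn h0 mulmx1.
by rewrite [RHS]addrC [g _ + _]addrC.
Qed.

Section ProjectionMap.
Variables (R : realType) (K : nat).
Local Notation C := R[i].

Definition halfBtilde N (x : Rep R N K) : 'M[C]_N := 2^-1 *: Btilde x.

Lemma piN_in_LmGL N (x : Rep R N K) : in_LmGL (piN x).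
Proof. by []. Qed.

Lemma piNS N (x : Rep R N K) m :
  piN x m.+1 = repPsibar x *m halfBtilde x ^+ m *m repPsi x.
Proof. by []. Qed.

Lemma halfBtilde_iotaN N d (x : Rep R N K) :
  halfBtilde (iotaN d x) = block_mx (halfBtilde x) 0 0 0.
Proof.
rewrite /halfBtilde /Btilde /= mul_col_row add_block_mx.
by rewrite !mulmx0 !mul0mx !addr0 scale_block_mx !scaler0.
Qed.

(* The antisymmetric off-diagonal blocks of [mN] cancel the lower-left block
   of [psi psibar] and double its upper-right one, so that halving makes
   [halfBtilde] block upper triangular with corner [psi1 psibar2]. *)
Lemma halfBtilde_mN N1 N2 (x1 : Rep R N1 K) (x2 : Rep R N2 K) :
  halfBtilde (mN x1 x2) =
  block_mx (halfBtilde x1) (repPsi x1 *m repPsibar x2) 0 (halfBtilde x2).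
Proof.
rewrite /halfBtilde /Btilde /= mul_col_row add_block_mx addNr.
rewrite scale_block_mx scaler0 -mulr2n -(scaler_nat 2 (_ *m _)) scalerA.
by rewrite mulVf ?scale1r // pnatr_eq0.
Qed.

Lemma piN_iotaN N d (x : Rep R N K) : piN (iotaN d x) = piN x.
Proof.
apply: functional_extensionality => -[|m] //.
rewrite !piNS halfBtilde_iotaN expmx_block_utri mulmx_row_block_utri_col.
by rewrite !mulmx0 !addr0.
Qed.

Lemma piN_mN N1 N2 (x1 : Rep R N1 K) (x2 : Rep R N2 K) :
  piN (mN x1 x2) = LmGL_mul (piN x1) (piN x2).
Proof.
apply: functional_extensionality => -[|m].
  by rewrite (LmGL_mul_in (piN_in_LmGL x1) (piN_in_LmGL x2)).
rewrite LmGL_mulS // !piNS halfBtilde_mN expmx_block_utri.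
rewrite mulmx_row_block_utri_col mulmx_sumr mulmx_suml; congr (_ + _ + _).
by apply: eq_bigr => i _; rewrite -(subnSK (ltn_ord i)) !piNS !mulmxA.
Qed.

End ProjectionMap.

Theorem mainTheorem14 (R : realType) (K : nat) :
  (forall (N d : nat), (0 < d)%N ->
     forall x : Rep R N K, piN (iotaN d x) = piN x) /\
  (forall (N1 N2 : nat) (x1 : Rep R N1 K) (x2 : Rep R N2 K),
     piN (mN x1 x2) = LmGL_mul (piN x1) (piN x2)).
Proof.
split; last exact: piN_mN.
by move=> N d _ x; exact: piN_iotaN.
Qed.
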